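(* Let $\mathcal{H}_1=(\mathcal{A}_1,\Delta_{\mathcal{A}_1},S_{\mathcal{A}_1},\varepsilon_{\mathcal{A}_1})$ and $\mathcal{H}_2=(\mathcal{A}_2,\Delta_{\mathcal{A}_2},S_{\mathcal{A}_2},\varepsilon_{\mathcal{A}_2})$ be Hopf algebras over a field $k$, $\mathcal{B}$ a unital $k$-algebra, and $\alpha:\mathcal{A}_1\to\mathcal{B}\otimes\mathcal{A}_2$ a quantum family of homomorphisms from $\mathcal{H}_1$ to $\mathcal{H}_2$. Then $\alpha\circ S_{\mathcal{A}_1}=(\mathrm{id}_{\mathcal{B}}\otimes S_{\mathcal{A}_2})\circ\alpha$.
   Context: Sweedler notation $\Delta(a)=a_{(1)}\otimes a_{(2)}$. For $x\in\mathcal{B}\otimes\mathcal{A}_2$, $x_{12}$ and $x_{13}$ denote $x$ placed in legs (1,2), resp. (1,3), of $\mathcal{B}\otimes\mathcal{A}_2\otimes\mathcal{A}_2$ with $\mathds{1}$ in the remaining leg. Definition: a unital algebra homomorphism $\alpha:\mathcal{A}_1\to\mathcal{B}\otimes\mathcal{A}_2$ is a quantum family of homomorphisms from $\mathcal{H}_1$ to $\mathcal{H}_2$ if $\alpha(a_{(1)})_{12}\alpha(a_{(2)})_{13}=(\mathrm{id}_{\mathcal{B}}\otimes\Delta_{\mathcal{A}_2})(\alpha(a))$ for all $a\in\mathcal{A}_1$. *)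

(* Tensor products of k-vector spaces / k-algebras are not in
   the library; they are specified here by their universal property. *)
From HB Require Import structures.
From mathcomp Require Import all_boot all_order all_algebra.
Set Implicit Arguments. Unset Strict Implicit. Unset Printing Implicit Defensive.
Import GRing.Theory.
Local Open Scope ring_scope.

Section Hopf.
Variable k : fieldType.

Definition lin (U V : lmodType k) (f : U -> V) : Prop :=
  forall (c : k) x y, f (c *: x + y) = c *: f x + f y.

Definition bilin (U V W : lmodType k) (f : U -> V -> W) : Prop :=
  (forall u, lin (f u)) /\ (forall v, lin (fun u => f u v)).

Definition trilin (U V X W : lmodType k) (f : U -> V -> X -> W) : Prop :=
  [/\ forall u v, lin (f u v), forall u w, lin (fun v => f u v w)
    & forall v w, lin (fun u => f u v w)].

Definition is_tensor (U V W : lmodType k) (t : U -> V -> W) : Prop :=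
  bilin t /\
  forall (X : lmodType k) (f : U -> V -> X), bilin f ->
    exists g : W -> X, [/\ lin g, forall u v, g (t u v) = f u v
      & forall g' : W -> X, lin g' -> (forall u v, g' (t u v) = f u v) ->
          forall w, g' w = g w].

Definition is_tensor3 (U V X W : lmodType k) (t : U -> V -> X -> W) : Prop :=
  trilin t /\
  forall (Y : lmodType k) (f : U -> V -> X -> Y), trilin f ->
    exists g : W -> Y, [/\ lin g, forall u v x, g (t u v x) = f u v x
      & forall g' : W -> Y, lin g' -> (forall u v x, g' (t u v x) = f u v x) ->
          forall w, g' w = g w].

Definition is_tensor_alg (A B T : algType k) (t : A -> B -> T) : Prop :=
  [/\ is_tensor t, t 1 1 = 1
    & forall a b a' b', t a b * t a' b' = t (a * a') (b * b')].

Definition is_tensor3_alg (A B C T : algType k) (t : A -> B -> C -> T) : Prop :=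
  [/\ is_tensor3 t, t 1 1 1 = 1
    & forall a b c a' b' c', t a b c * t a' b' c' = t (a * a') (b * b') (c * c')].

Definition alg_hom (A B : algType k) (f : A -> B) : Prop :=
  lin f /\ monoid_morphism f.

(* Hopf algebra structure on a k-algebra A, relative to a chosen model
   hT of A (x) A and a chosen model hT3 of A (x) A (x) A. *)
Record hopf_algebra := HopfAlgebra {
  hA : algType k;
  hT : algType k;
  htens : hA -> hA -> hT;
  hT3 : lmodType k;
  htens3 : hA -> hA -> hA -> hT3;
  hDelta : hA -> hT;
  hS : hA -> hA;
  heps : hA -> k;
  htensP : is_tensor_alg htens;
  htens3P : is_tensor3 htens3;
  hDelta_hom : alg_hom hDelta;
  heps_lin : forall (c : k) x y, heps (c *: x + y) = c * heps x + heps y;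
  heps_mult : monoid_morphism heps;
  (* coassociativity (Delta (x) id) Delta = (id (x) Delta) Delta *)
  hcoassoc : forall (L R : hT -> hT3) (c d : hA -> hT -> hT3),
    lin L -> lin R -> (forall y, lin (c y)) -> (forall x, lin (d x)) ->
    (forall u v y, c y (htens u v) = htens3 u v y) ->
    (forall x u v, d x (htens u v) = htens3 x u v) ->
    (forall x y, L (htens x y) = c y (hDelta x)) ->
    (forall x y, R (htens x y) = d x (hDelta y)) ->
    forall a, L (hDelta a) = R (hDelta a);
  hcounitl : forall g : hT -> hA, lin g ->
    (forall x y, g (htens x y) = heps x *: y) -> forall a, g (hDelta a) = a;
  hcounitr : forall g : hT -> hA, lin g ->
    (forall x y, g (htens x y) = heps y *: x) -> forall a, g (hDelta a) = a;
  hS_lin : lin hS;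
  hantipodel : forall g : hT -> hA, lin g ->
    (forall x y, g (htens x y) = hS x * y) ->
    forall a, g (hDelta a) = heps a *: 1;
  hantipoder : forall g : hT -> hA, lin g ->
    (forall x y, g (htens x y) = x * hS y) ->
    forall a, g (hDelta a) = heps a *: 1
}.

(* alpha : A1 -> B (x) A2 is a quantum family of homomorphisms from H1 to H2,
   where (BA, tBA) models B (x) A2 and (BAA, tBAA) models B (x) A2 (x) A2:
   alpha(a_(1))_12 alpha(a_(2))_13 = (id (x) Delta_2)(alpha a). *)
Definition quantum_family (H1 H2 : hopf_algebra) (B BA BAA : algType k)
    (tBA : B -> hA H2 -> BA) (tBAA : B -> hA H2 -> hA H2 -> BAA)
    (alpha : hA H1 -> BA) : Prop :=
  alg_hom alpha /\
  forall (Lhs : hT H1 -> BAA) (i12 i13 D : BA -> BAA) (e : B -> hT H2 -> BAA),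
    lin i12 -> (forall b a, i12 (tBA b a) = tBAA b a 1) ->
    lin i13 -> (forall b a, i13 (tBA b a) = tBAA b 1 a) ->
    lin Lhs ->
    (forall x y, Lhs (htens x y) = i12 (alpha x) * i13 (alpha y)) ->
    (forall b, lin (e b)) ->
    (forall b u v, e b (htens u v) = tBAA b u v) ->
    lin D -> (forall b a, D (tBA b a) = e b (hDelta a)) ->
    forall a : hA H1, Lhs (hDelta a) = D (alpha a).

End Hopf.

(* Work in the convolution algebra of linear maps [A1 -> B (x) A2].  As [alpha] is
   multiplicative, [alpha o S1] is a right convolution inverse of [alpha].  Contracting
   [alpha(a_(1))_12 alpha(a_(2))_13 = (id (x) Delta2)(alpha a)] with the antipode axiom of
   [H2] gives [((id (x) S2) o alpha) * alpha = (id (x) eps2) o alpha], and contracting it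
   with the counit axiom gives [((id (x) eps2) o alpha) * alpha = alpha]; cancelling
   [alpha] on the right, [(id (x) eps2) o alpha] is the convolution unit.  Hence
   [(id (x) S2) o alpha] is a left inverse of [alpha], and it must agree with the right
   inverse [alpha o S1]. *)

From HB Require Import structures.
From mathcomp Require Import all_boot all_order all_algebra.
From Stdlib Require Import ClassicalEpsilon.
Set Implicit Arguments. Unset Strict Implicit. Unset Printing Implicit Defensive.
Import GRing.Theory.
Local Open Scope ring_scope.

Section Linear.
Variable k : fieldType.

Lemma lin0 (U V : lmodType k) (f : U -> V) : lin f -> f 0 = 0.
Proof.
move=> Hf; have := Hf 1 0 0; rewrite !scale1r addr0.
by move=> /(congr1 (fun z => z - f 0)); rewrite subrr addrK => <-.
Qed.

Lemma linZ (U V : lmodType k) (f : U -> V) : lin f -> forall c x, f (c *: x) = c *: f x.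
Proof. by move=> Hf c x; have := Hf c x 0; rewrite addr0 (lin0 Hf) addr0. Qed.

Lemma lin_id (U : lmodType k) : lin (fun x : U => x).
Proof. by []. Qed.

Lemma lin_comp (U V W : lmodType k) (f : V -> W) (g : U -> V) :
  lin f -> lin g -> lin (fun x => f (g x)).
Proof. by move=> Hf Hg c x y; rewrite Hg Hf. Qed.

Lemma lin_scale (U V : lmodType k) (f : U -> V) (r : k) : lin f -> lin (fun x => r *: f x).
Proof. by move=> Hf c x y; rewrite Hf scalerDr !scalerA mulrC. Qed.

Lemma lin_comb (U V : lmodType k) (f g : U -> V) (r : k) :
  lin f -> lin g -> lin (fun x => r *: f x + g x).
Proof. by move=> Hf Hg c x y; rewrite Hf Hg !scalerDr !scalerA mulrC addrACA. Qed.

Lemma lin_scalev (U V : lmodType k) (e : U -> k) (v : V) :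
  (forall c x y, e (c *: x + y) = c * e x + e y) -> lin (fun x => e x *: v).
Proof. by move=> He c x y; rewrite He scalerDl scalerA. Qed.

Lemma lin_mull (U : lmodType k) (R : algType k) (f : U -> R) (c : R) :
  lin f -> lin (fun x => c * f x).
Proof. by move=> Hf a x y; rewrite Hf mulrDr scalerAr. Qed.

Lemma lin_mulr (U : lmodType k) (R : algType k) (f : U -> R) (c : R) :
  lin f -> lin (fun x => f x * c).
Proof. by move=> Hf a x y; rewrite Hf mulrDl -scalerAl. Qed.

Lemma bilin_mul (U V : lmodType k) (R : algType k) (f : U -> R) (h : V -> R) :
  lin f -> lin h -> bilin (fun x y => f x * h y).
Proof. by move=> Hf Hh; split=> [x|y]; [exact: lin_mull | exact: lin_mulr]. Qed.

End Linear.

Section TensorLift.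
Variables (k : fieldType) (U V W : lmodType k) (t : U -> V -> W).
Hypothesis Ht : is_tensor t.

Lemma tensor_ext (X : lmodType k) (g1 g2 : W -> X) : lin g1 -> lin g2 ->
  (forall u v, g1 (t u v) = g2 (t u v)) -> forall w, g1 w = g2 w.
Proof.
move=> H1 H2 Heq w; case: Ht => [[Hl Hr] Hu].
have bf : bilin (fun u v => g1 (t u v)).
  by split=> [u|v]; [exact: (lin_comp H1 (Hl u)) | exact: (lin_comp H1 (Hr v))].
have [g [_ _ Hg]] := Hu X _ bf.
by rewrite (Hg g1 H1 (fun _ _ => erefl)) (Hg g2 H2 (fun u v => esym (Heq u v))).
Qed.

(* A choice of the linear map induced by [f]; it is meaningful only for bilinear [f]. *)
Definition tensor_lift (X : lmodType k) (f : U -> V -> X) : W -> X :=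
  epsilon (inhabits (fun _ => 0)) (fun g => lin g /\ forall u v, g (t u v) = f u v).

Section Bilinear.
Variables (X : lmodType k) (f : U -> V -> X).
Hypothesis bf : bilin f.

Let tensor_liftP : lin (tensor_lift f) /\ forall u v, tensor_lift f (t u v) = f u v.
Proof.
apply: (epsilon_spec (inhabits (fun _ : W => 0 : X))
  (fun g => lin g /\ forall u v, g (t u v) = f u v)).
by have [g [? ? _]] := Ht.2 X f bf; exists g.
Qed.

Lemma tensor_lift_lin : lin (tensor_lift f).
Proof. exact: tensor_liftP.1. Qed.

Lemma tensor_liftE u v : tensor_lift f (t u v) = f u v.
Proof. exact: tensor_liftP.2. Qed.

End Bilinear.

Lemma tensor_lift_lin_param (P X : lmodType k) (f : P -> U -> V -> X) :
  (forall p, bilin (f p)) -> (forall u v, lin (fun p => f p u v)) ->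
  forall w, lin (fun p => tensor_lift (f p) w).
Proof.
move=> bf fP w r p q.
apply: (tensor_ext (tensor_lift_lin (bf _))
          (lin_comb r (tensor_lift_lin (bf p)) (tensor_lift_lin (bf q)))) => u v.
by rewrite !tensor_liftE //; apply: fP.
Qed.

End TensorLift.

Section Coassociativity.
Variables (k : fieldType) (H : hopf_algebra k).
Local Notation A := (hA H).
Local Notation tens := (@htens k H).
Local Notation tens3 := (@htens3 k H).

Lemma htens_tensor : is_tensor tens.
Proof. by case: (htensP H). Qed.

Lemma hDelta_lin : lin (@hDelta k H).
Proof. by case: (hDelta_hom H). Qed.

Lemma bilin_tens3_append (y : A) : bilin (fun u v => tens3 u v y).
Proof. by case: (htens3P H) => -[_ T2 T3] _; split=> [u|v]; [exact: T2 | exact: T3]. Qed.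

Lemma bilin_tens3_prepend (x : A) : bilin (tens3 x).
Proof. by case: (htens3P H) => -[T1 T2 _] _; split=> [u|v]; [exact: T1 | exact: T2]. Qed.

Definition tens3_append (y : A) : hT H -> hT3 H :=
  tensor_lift tens (fun u v => tens3 u v y).

Definition tens3_prepend (x : A) : hT H -> hT3 H := tensor_lift tens (tens3 x).

Lemma bilin_Delta_tens_id : bilin (fun x y => tens3_append y (hDelta x)).
Proof.
have [[T1 _ _] _] := htens3P H.
split=> [x|y].
- exact: (tensor_lift_lin_param htens_tensor bilin_tens3_append T1).
- exact: lin_comp (tensor_lift_lin htens_tensor (bilin_tens3_append y)) hDelta_lin.
Qed.

Lemma bilin_id_tens_Delta : bilin (fun x y => tens3_prepend x (hDelta y)).
Proof.
have [[_ _ T3] _] := htens3P H.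
split=> [x|y].
- exact: lin_comp (tensor_lift_lin htens_tensor (bilin_tens3_prepend x)) hDelta_lin.
- exact: (tensor_lift_lin_param htens_tensor bilin_tens3_prepend (fun u v => T3 u v)).
Qed.

Definition Delta_tens_id : hT H -> hT3 H :=
  tensor_lift tens (fun x y => tens3_append y (hDelta x)).

Definition id_tens_Delta : hT H -> hT3 H :=
  tensor_lift tens (fun x y => tens3_prepend x (hDelta y)).

Lemma coassoc (a : A) : Delta_tens_id (hDelta a) = id_tens_Delta (hDelta a).
Proof.
apply: (hcoassoc (c := tens3_append) (d := tens3_prepend)).
- exact: (tensor_lift_lin htens_tensor bilin_Delta_tens_id).
- exact: (tensor_lift_lin htens_tensor bilin_id_tens_Delta).
- by move=> y; apply: (tensor_lift_lin htens_tensor (bilin_tens3_append y)).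
- by move=> x; apply: (tensor_lift_lin htens_tensor (bilin_tens3_prepend x)).
- by move=> u v y; apply: (tensor_liftE htens_tensor (bilin_tens3_append y)).
- by move=> x u v; apply: (tensor_liftE htens_tensor (bilin_tens3_prepend x)).
- exact: (tensor_liftE htens_tensor bilin_Delta_tens_id).
- exact: (tensor_liftE htens_tensor bilin_id_tens_Delta).
Qed.

End Coassociativity.

Arguments htens_tensor {k H}.
Arguments hDelta_lin {k H}.
Arguments bilin_Delta_tens_id {k H}.
Arguments bilin_id_tens_Delta {k H}.

Section Convolution.
Variables (k : fieldType) (H : hopf_algebra k) (R : algType k).
Local Notation A := (hA H).
Local Notation tens := (@htens k H).

Definition conv (f h : A -> R) (a : A) : R :=
  tensor_lift tens (fun x y => f x * h y) (hDelta a).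

Definition conv1 (a : A) : R := heps a *: 1.

Lemma conv_lin (f h : A -> R) : lin f -> lin h -> lin (conv f h).
Proof.
move=> Hf Hh; apply: lin_comp hDelta_lin.
exact: (tensor_lift_lin htens_tensor (bilin_mul Hf Hh)).
Qed.

Lemma convE (f h : A -> R) (mu : hT H -> R) : lin f -> lin h -> lin mu ->
  (forall x y, mu (tens x y) = f x * h y) -> forall a, conv f h a = mu (hDelta a).
Proof.
move=> Hf Hh Hmu muE a; have bfh := bilin_mul Hf Hh.
apply: (tensor_ext htens_tensor (tensor_lift_lin htens_tensor bfh) Hmu) => u v.
by rewrite (tensor_liftE htens_tensor bfh) muE.
Qed.

Lemma eq_conv (f f' h h' : A -> R) : lin f -> lin h -> f =1 f' -> h =1 h' ->
  conv f h =1 conv f' h'.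
Proof.
move=> Hf Hh Ef Eh a; have bfh := bilin_mul Hf Hh.
have Hf' : lin f' by move=> c x y; rewrite -!Ef.
have Hh' : lin h' by move=> c x y; rewrite -!Eh.
symmetry; apply: (convE Hf' Hh' (tensor_lift_lin htens_tensor bfh)) => x y.
by rewrite (tensor_liftE htens_tensor bfh) Ef Eh.
Qed.

Lemma conv1_lin : lin conv1.
Proof. exact/lin_scalev/heps_lin. Qed.

Lemma conv1r (f : A -> R) : lin f -> conv f conv1 =1 f.
Proof.
move=> Hf a.
have bepsr : bilin (fun x y : A => heps y *: x).
  split=> [x|y]; first exact/lin_scalev/heps_lin.
  by move=> c u v; rewrite scalerDr !scalerA mulrC.
have epsrL := tensor_lift_lin htens_tensor bepsr.
rewrite (convE (mu := fun w => f (tensor_lift tens (fun x y : A => heps y *: x) w))).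
- by rewrite (hcounitr epsrL (tensor_liftE htens_tensor bepsr)).
- exact: Hf.
- exact: conv1_lin.
- exact: lin_comp epsrL.
- by move=> x y; rewrite (tensor_liftE htens_tensor bepsr) (linZ Hf) /conv1 -scalerAr mulr1.
Qed.

Lemma conv1l (f : A -> R) : lin f -> conv conv1 f =1 f.
Proof.
move=> Hf a.
have bepsl : bilin (fun x y : A => heps x *: y).
  split=> [x|y]; last exact/lin_scalev/heps_lin.
  by move=> c u v; rewrite scalerDr !scalerA mulrC.
have epslL := tensor_lift_lin htens_tensor bepsl.
rewrite (convE (mu := fun w => f (tensor_lift tens (fun x y : A => heps x *: y) w))).
- by rewrite (hcounitl epslL (tensor_liftE htens_tensor bepsl)).
- exact: conv1_lin.
- exact: Hf.
- exact: lin_comp epslL.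
- by move=> x y; rewrite (tensor_liftE htens_tensor bepsl) (linZ Hf) /conv1 -scalerAl mul1r.
Qed.

Lemma conv_assoc (f h l : A -> R) : lin f -> lin h -> lin l ->
  conv (conv f h) l =1 conv f (conv h l).
Proof.
move=> Hf Hh Hl a.
have bfh := bilin_mul Hf Hh; have bhl := bilin_mul Hh Hl.
have trif : trilin (fun x y z => f x * h y * l z).
  by split=> *; [exact: lin_mull | exact/lin_mulr/lin_mull | exact/lin_mulr/lin_mulr].
have [M [ML ME _]] := (htens3P H).2 R _ trif.
have fhL := tensor_lift_lin htens_tensor bfh; have hlL := tensor_lift_lin htens_tensor bhl.
have appendE y t : M (tens3_append y t) = tensor_lift tens (fun x y => f x * h y) t * l y.
  have appL := tensor_lift_lin htens_tensor (bilin_tens3_append y).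
  apply: (tensor_ext htens_tensor (lin_comp ML appL) (lin_mulr _ fhL)) => u v.
  rewrite /tens3_append (tensor_liftE htens_tensor (bilin_tens3_append y)).
  by rewrite (tensor_liftE htens_tensor bfh); exact: ME.
have prependE x t : M (tens3_prepend x t) = f x * tensor_lift tens (fun x y => h x * l y) t.
  have preL := tensor_lift_lin htens_tensor (bilin_tens3_prepend x).
  apply: (tensor_ext htens_tensor (lin_comp ML preL) (lin_mull _ hlL)) => u v.
  rewrite /tens3_prepend (tensor_liftE htens_tensor (bilin_tens3_prepend x)).
  by rewrite (tensor_liftE htens_tensor bhl) mulrA; exact: ME.
have DidL : lin (fun w => M (Delta_tens_id w)).
  exact: lin_comp ML (tensor_lift_lin htens_tensor bilin_Delta_tens_id).
have idDL : lin (fun w => M (id_tens_Delta w)).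
  exact: lin_comp ML (tensor_lift_lin htens_tensor bilin_id_tens_Delta).
rewrite (convE (conv_lin Hf Hh) Hl DidL) => [|x y]; last first.
  by rewrite /Delta_tens_id (tensor_liftE htens_tensor bilin_Delta_tens_id) appendE.
rewrite /= coassoc (convE Hf (conv_lin Hh Hl) idDL) // => x y.
by rewrite /id_tens_Delta (tensor_liftE htens_tensor bilin_id_tens_Delta) prependE.
Qed.

Lemma conv_rcancel (f f' x y : A -> R) : lin f -> lin f' -> lin x -> lin y ->
  conv f f' =1 conv1 -> conv x f =1 conv y f -> x =1 y.
Proof.
move=> Hf Hf' Hx Hy ff' Exy a.
have through_f z : lin z -> z a = conv (conv z f) f' a.
  move=> Hz; rewrite conv_assoc // (eq_conv Hz (conv_lin Hf Hf') (frefl z) ff').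
  by rewrite conv1r.
by rewrite (through_f x Hx) (through_f y Hy) (eq_conv (conv_lin Hx Hf) Hf' Exy (frefl f')).
Qed.

Lemma conv_inv_uniq (f fl fr : A -> R) : lin f -> lin fl -> lin fr ->
  conv fl f =1 conv1 -> conv f fr =1 conv1 -> fl =1 fr.
Proof.
move=> Hf Hl Hr lf fr1 a.
rewrite -(conv1r Hl) -(eq_conv Hl (conv_lin Hf Hr) (frefl fl) fr1) -conv_assoc //.
by rewrite (eq_conv (conv_lin Hl Hf) Hr lf (frefl fr)) conv1l.
Qed.

End Convolution.

Section QuantumFamily.
Variables (k : fieldType) (H1 H2 : hopf_algebra k) (B BA BAA : algType k)
  (tBA : B -> hA H2 -> BA) (tBAA : B -> hA H2 -> hA H2 -> BAA) (alpha : hA H1 -> BA).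
Hypotheses (HBA : is_tensor_alg tBA) (HBAA : is_tensor3_alg tBAA)
  (Hqf : quantum_family tBA tBAA alpha).

Let tBA_tensor : is_tensor tBA. Proof. by case: HBA. Qed.
Let tBA_mul b x c y : tBA b x * tBA c y = tBA (b * c) (x * y). Proof. by case: HBA. Qed.
Let tBA_lin2 b : lin (tBA b). Proof. by case: tBA_tensor => -[]. Qed.
Let tBA_lin1 x : lin (fun b => tBA b x). Proof. by case: tBA_tensor => -[]. Qed.
Let tBAA_tensor3 : is_tensor3 tBAA. Proof. by case: HBAA. Qed.
Let tBAA_trilin : trilin tBAA. Proof. by case: tBAA_tensor3. Qed.
Let tBAA_mul b x y c x' y' : tBAA b x y * tBAA c x' y' = tBAA (b * c) (x * x') (y * y').
Proof. by case: HBAA. Qed.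
Let alpha_lin : lin alpha. Proof. by case: Hqf => -[]. Qed.
Let alpha1 : alpha 1 = 1. Proof. by case: Hqf => -[_ []]. Qed.
Let alphaM x y : alpha (x * y) = alpha x * alpha y. Proof. by case: Hqf => -[_ []]. Qed.

Let bilin_leg12 : bilin (fun b a => tBAA b a 1).
Proof. by case: tBAA_trilin => _ T2 T3; split=> [b|a]; [exact: T2 | exact: T3]. Qed.

Let bilin_leg13 : bilin (fun b a => tBAA b 1 a).
Proof. by case: tBAA_trilin => T1 _ T3; split=> [b|a]; [exact: T1 | exact: T3]. Qed.

Let bilin_leg23 b : bilin (tBAA b).
Proof. by case: tBAA_trilin => T1 T2 _; split=> [x|y]; [exact: T1 | exact: T2]. Qed.

Definition leg12 : BA -> BAA := tensor_lift tBA (fun b a => tBAA b a 1).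
Definition leg13 : BA -> BAA := tensor_lift tBA (fun b a => tBAA b 1 a).
Definition leg23 (b : B) : hT H2 -> BAA := tensor_lift (@htens k H2) (tBAA b).

Let leg12_lin : lin leg12. Proof. exact (tensor_lift_lin tBA_tensor bilin_leg12). Qed.
Let leg12E b a : leg12 (tBA b a) = tBAA b a 1.
Proof. exact (tensor_liftE tBA_tensor bilin_leg12 b a). Qed.
Let leg13_lin : lin leg13. Proof. exact (tensor_lift_lin tBA_tensor bilin_leg13). Qed.
Let leg13E b a : leg13 (tBA b a) = tBAA b 1 a.
Proof. exact (tensor_liftE tBA_tensor bilin_leg13 b a). Qed.
Let leg23_lin b : lin (leg23 b).
Proof. exact (tensor_lift_lin htens_tensor (bilin_leg23 b)). Qed.
Let leg23E b u v : leg23 b (htens u v) = tBAA b u v.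
Proof. exact (tensor_liftE htens_tensor (bilin_leg23 b) u v). Qed.

Let bilin_idB_Delta : bilin (fun b a => leg23 b (hDelta a)).
Proof.
split=> [b|a]; first exact: lin_comp (leg23_lin b) hDelta_lin.
by case: tBAA_trilin => _ _ T3; exact: (tensor_lift_lin_param htens_tensor bilin_leg23 T3).
Qed.

Definition idB_Delta : BA -> BAA := tensor_lift tBA (fun b a => leg23 b (hDelta a)).

Let idB_Delta_lin : lin idB_Delta.
Proof. exact (tensor_lift_lin tBA_tensor bilin_idB_Delta). Qed.
Let idB_DeltaE b a : idB_Delta (tBA b a) = leg23 b (hDelta a).
Proof. exact (tensor_liftE tBA_tensor bilin_idB_Delta b a). Qed.

Lemma quantum_familyE :
  conv (fun x => leg12 (alpha x)) (fun x => leg13 (alpha x))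
  =1 (fun a => idB_Delta (alpha a)).
Proof.
have L12 : lin (fun x => leg12 (alpha x)) := lin_comp leg12_lin alpha_lin.
have L13 : lin (fun x => leg13 (alpha x)) := lin_comp leg13_lin alpha_lin.
have bL := bilin_mul L12 L13.
move=> a; apply: (Hqf.2 _ leg12 leg13 idB_Delta leg23) => //.
- exact (tensor_lift_lin htens_tensor bL).
- exact (tensor_liftE htens_tensor bL).
Qed.

(* [Phi] contracts [B (x) A2 (x) A2] so that [Phi (x_12 * y_13) = G x * y]; applied to
   the defining identity of a quantum family it computes [(G o alpha) * alpha]. *)
Lemma conv_alpha_contract (Phi : BAA -> BA) (G K : BA -> BA) :
  lin Phi -> lin G -> lin K ->
  (forall b c x y, Phi (tBAA (b * c) x y) = G (tBA b x) * tBA c y) ->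
  (forall b x, Phi (leg23 b (hDelta x)) = K (tBA b x)) ->
  conv (fun x => G (alpha x)) alpha =1 (fun a => K (alpha a)).
Proof.
move=> PhiL GL KL PhiE PhiDelta a.
have L12 : lin (fun x => leg12 (alpha x)) := lin_comp leg12_lin alpha_lin.
have L13 : lin (fun x => leg13 (alpha x)) := lin_comp leg13_lin alpha_lin.
have bL := bilin_mul L12 L13.
have PhiM u v : Phi (leg12 u * leg13 v) = G u * v.
  have PhiM_pure b x v' : Phi (leg12 (tBA b x) * leg13 v') = G (tBA b x) * v'.
    apply: (tensor_ext tBA_tensor (lin_comp PhiL (lin_mull _ leg13_lin))
              (lin_mull _ (@lin_id _ _))) => c y /=.
    by rewrite leg12E leg13E tBAA_mul mulr1 mul1r PhiE.
  apply: (tensor_ext tBA_tensor (g1 := fun u => Phi (leg12 u * leg13 v))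
            (lin_comp PhiL (lin_mulr _ leg12_lin)) (lin_mulr _ GL)) => b x.
  exact: PhiM_pure.
have -> : conv (fun x => G (alpha x)) alpha a
          = Phi (conv (fun x => leg12 (alpha x)) (fun x => leg13 (alpha x)) a).
  apply: (convE _ alpha_lin (lin_comp PhiL (tensor_lift_lin htens_tensor bL))) => [|x y].
    exact: lin_comp GL alpha_lin.
  by rewrite /= (tensor_liftE htens_tensor bL) PhiM.
rewrite quantum_familyE.
apply: (tensor_ext tBA_tensor (g1 := fun w => Phi (idB_Delta w))
          (lin_comp PhiL idB_Delta_lin) KL).
by move=> b x /=; rewrite idB_DeltaE PhiDelta.
Qed.

Lemma leg23_contract (Phi : BAA -> BA) (b : B) (m : hA H2 -> hA H2 -> hA H2) :
  lin Phi -> bilin m -> (forall u v, Phi (tBAA b u v) = tBA b (m u v)) ->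
  forall t, Phi (leg23 b t) = tBA b (tensor_lift (@htens k H2) m t).
Proof.
move=> PhiL bm PhiE.
apply: (tensor_ext htens_tensor (lin_comp PhiL (leg23_lin b))
          (lin_comp (tBA_lin2 b) (tensor_lift_lin htens_tensor bm))) => u v /=.
by rewrite leg23E PhiE (tensor_liftE htens_tensor bm).
Qed.

Let bilin_id_counit : bilin (fun b (x : hA H2) => heps x *: tBA b 1).
Proof.
split=> [b|x]; first exact/lin_scalev/heps_lin.
exact: lin_scale (tBA_lin1 1).
Qed.

Definition id_counit : BA -> BA :=
  tensor_lift tBA (fun b (x : hA H2) => heps x *: tBA b 1).

Let id_counit_lin : lin id_counit.
Proof. exact (tensor_lift_lin tBA_tensor bilin_id_counit). Qed.
Let id_counitE b x : id_counit (tBA b x) = heps x *: tBA b 1.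
Proof. exact (tensor_liftE tBA_tensor bilin_id_counit b x). Qed.

Lemma conv_idS_alpha (g : BA -> BA) :
  lin g -> (forall b a, g (tBA b a) = tBA b (hS a)) ->
  conv (fun x => g (alpha x)) alpha =1 (fun a => id_counit (alpha a)).
Proof.
move=> gL gE.
have SmulL : bilin (fun u v : hA H2 => hS u * v).
  by split=> [u|v]; [exact: lin_mull (@lin_id _ _) | exact: lin_mulr (@hS_lin _ H2)].
have triS : trilin (fun b x y => tBA b (hS x * y)).
  split=> [b x|b y|x y]; last exact: tBA_lin1.
  - exact: lin_comp (tBA_lin2 b) (lin_mull _ (@lin_id _ _)).
  - exact: lin_comp (tBA_lin2 b) (lin_mulr _ (@hS_lin _ H2)).
have [Phi [PhiL PhiE _]] := tBAA_tensor3.2 BA _ triS.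
apply: (conv_alpha_contract PhiL gL id_counit_lin) => [b c x y|b x].
  by rewrite PhiE gE tBA_mul.
rewrite (leg23_contract PhiL SmulL) //.
by rewrite (hantipodel (tensor_lift_lin htens_tensor SmulL) (tensor_liftE htens_tensor SmulL))
  id_counitE (linZ (tBA_lin2 b)).
Qed.

Lemma conv_id_counit_alpha : conv (fun x => id_counit (alpha x)) alpha =1 alpha.
Proof.
have epsL : bilin (fun u v : hA H2 => heps u *: v).
  split=> [u|v]; last exact/lin_scalev/heps_lin.
  exact: lin_scale (@lin_id _ _).
have trie : trilin (fun b (x : hA H2) y => heps x *: tBA b y).
  split=> [b x|b y|x y].
  - exact: lin_scale (tBA_lin2 b).
  - exact/lin_scalev/heps_lin.
  - exact: lin_scale (tBA_lin1 y).
have [Phi [PhiL PhiE _]] := tBAA_tensor3.2 BA _ trie.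
apply: (conv_alpha_contract PhiL id_counit_lin (@lin_id _ _)) => [b c x y|b x].
  by rewrite PhiE id_counitE -scalerAl tBA_mul mul1r.
rewrite (leg23_contract PhiL epsL) => [|u v]; last by rewrite PhiE (linZ (tBA_lin2 b)).
by rewrite (hcounitl (tensor_lift_lin htens_tensor epsL) (tensor_liftE htens_tensor epsL)).
Qed.

Lemma conv_alpha_alphaS : conv alpha (fun x => alpha (hS x)) =1 conv1 BA.
Proof.
have mulS : bilin (fun x y : hA H1 => x * hS y).
  by split=> [u|v]; [exact: lin_mull (@hS_lin _ H1) | exact: lin_mulr (@lin_id _ _)].
have mulSL := tensor_lift_lin htens_tensor mulS.
have alphaSL := lin_comp alpha_lin (@hS_lin _ H1).
move=> a; rewrite (convE alpha_lin alphaSL (lin_comp alpha_lin mulSL)).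
  by rewrite /= (hantipoder mulSL (tensor_liftE htens_tensor mulS)) (linZ alpha_lin) alpha1.
by move=> x y; rewrite /= (tensor_liftE htens_tensor mulS) alphaM.
Qed.

Lemma id_counit_alpha : (fun a => id_counit (alpha a)) =1 conv1 BA.
Proof.
apply: (conv_rcancel alpha_lin (lin_comp alpha_lin (@hS_lin _ H1))
          (lin_comp id_counit_lin alpha_lin) (@conv1_lin _ H1 BA) conv_alpha_alphaS) => a.
by rewrite conv_id_counit_alpha conv1l.
Qed.

End QuantumFamily.

Theorem theorem3p7 (k : fieldType) (H1 H2 : hopf_algebra k)
  (B BA BAA : algType k) (tBA : B -> hA H2 -> BA)
  (tBAA : B -> hA H2 -> hA H2 -> BAA) (alpha : hA H1 -> BA) :
  is_tensor_alg tBA -> is_tensor3_alg tBAA ->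
  quantum_family tBA tBAA alpha ->
  forall g : BA -> BA, lin g -> (forall b a, g (tBA b a) = tBA b (hS a)) ->
  forall a : hA H1, alpha (hS a) = g (alpha a).
Proof.
move=> HBA HBAA Hqf g gL gE a.
have alphaL : lin alpha by case: Hqf => -[].
have alphaSL := lin_comp alphaL (@hS_lin _ H1).
symmetry; apply: (conv_inv_uniq alphaL (lin_comp gL alphaL) alphaSL).
- by move=> x; rewrite (conv_idS_alpha HBA HBAA Hqf gL gE) (id_counit_alpha HBA HBAA Hqf).
- exact: conv_alpha_alphaS Hqf.
Qed.
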